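(* $\mathrm{Md}$ is a finite complete axiomatisation of the equational theory of cancellation meadows: for all $\Sigma_m$-terms $r,s$, $\mathrm{Md}\vdash r=s$ if and only if $r=s$ holds in every $\Sigma_m$-structure satisfying $\mathrm{Md}$ and the inverse law $\mathrm{IL}$.
   Context: $\Sigma_m=(0,1,+,\cdot,-,{}^{-1})$; $\mathrm{Md}$ is the set of equations $(x+y)+z=x+(y+z)$, $x+y=y+x$, $x+0=x$, $x+(-x)=0$, $(x\cdot y)\cdot z=x\cdot(y\cdot z)$, $x\cdot y=y\cdot x$, $1\cdot x=x$, $x\cdot(y+z)=x\cdot y+x\cdot z$, $(x^{-1})^{-1}=x$, $x\cdot(x\cdot x^{-1})=x$. The inverse law $\mathrm{IL}$ is the conditional axiom $x\neq 0\rightarrow x\cdot x^{-1}=1$. $\vdash$ is derivability in equational logic. *)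

From Stdlib Require Import List.
Import ListNotations.

Inductive term : Type :=
  | Var : nat -> term
  | Zero : term
  | One : term
  | Add : term -> term -> term
  | Mul : term -> term -> term
  | Opp : term -> term
  | Inv : term -> term.

Fixpoint subst (sg : nat -> term) (t : term) : term :=
  match t with
  | Var n => sg n
  | Zero => Zero
  | One => One
  | Add a b => Add (subst sg a) (subst sg b)
  | Mul a b => Mul (subst sg a) (subst sg b)
  | Opp a => Opp (subst sg a)
  | Inv a => Inv (subst sg a)
  end.

Definition equation := (term * term)%type.

Definition x := Var 0.
Definition y := Var 1.
Definition z := Var 2.

Definition Md : list equation :=
  [ (Add (Add x y) z, Add x (Add y z));
    (Add x y, Add y x);
    (Add x Zero, x);
    (Add x (Opp x), Zero);
    (Mul (Mul x y) z, Mul x (Mul y z));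
    (Mul x y, Mul y x);
    (Mul One x, x);
    (Mul x (Add y z), Add (Mul x y) (Mul x z));
    (Inv (Inv x), x);
    (Mul x (Mul x (Inv x)), x) ].

Inductive derives (E : list equation) : term -> term -> Prop :=
  | d_ax : forall l r sg, In (l, r) E -> derives E (subst sg l) (subst sg r)
  | d_refl : forall t, derives E t t
  | d_sym : forall s t, derives E s t -> derives E t s
  | d_trans : forall s t u, derives E s t -> derives E t u -> derives E s u
  | d_add : forall a a' b b', derives E a a' -> derives E b b' ->
      derives E (Add a b) (Add a' b')
  | d_mul : forall a a' b b', derives E a a' -> derives E b b' ->
      derives E (Mul a b) (Mul a' b')
  | d_opp : forall a a', derives E a a' -> derives E (Opp a) (Opp a')
  | d_inv : forall a a', derives E a a' -> derives E (Inv a) (Inv a').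

Record structure : Type := Struct {
  carrier : Type;
  s0 : carrier;
  s1 : carrier;
  sadd : carrier -> carrier -> carrier;
  smul : carrier -> carrier -> carrier;
  sopp : carrier -> carrier;
  sinv : carrier -> carrier }.

Fixpoint eval (A : structure) (v : nat -> carrier A) (t : term) : carrier A :=
  match t with
  | Var n => v n
  | Zero => s0 A
  | One => s1 A
  | Add a b => sadd A (eval A v a) (eval A v b)
  | Mul a b => smul A (eval A v a) (eval A v b)
  | Opp a => sopp A (eval A v a)
  | Inv a => sinv A (eval A v a)
  end.

Definition holds (A : structure) (r s : term) : Prop :=
  forall v : nat -> carrier A, eval A v r = eval A v s.

Definition models (A : structure) (E : list equation) : Prop :=
  forall l r, In (l, r) E -> holds A l r.

Definition IL (A : structure) : Prop :=
  forall a : carrier A, a <> s0 A -> smul A a (sinv A a) = s1 A.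

(* For completeness assume that
   r = s is not derivable and put d := r - s and e := d d^-1.  Modulo Md the
   terms form a commutative ring in which e is a nonzero idempotent.

   1. Any ideal J of the term ring is a congruence for all operations of
      Sigma_m (inverse included, thanks to the reflection law of Md), so the
      term algebra modulo J is a Sigma_m-structure satisfying Md.
   2. Enumerating all terms, we grow a chain of principal ideals generated by
      idempotents g with e not in (g), adding t t^-1 whenever this keeps e out.
      The union I avoids e and is "saturated": for every t, either t is in I
      or e = i + a t for some i in I and some a.
   3. A saturated ideal avoiding an idempotent satisfies: u not in I implies
      1 - u u^-1 in I; hence the quotient by I satisfies the inverse law.
   4. In this quotient r = s would give d in I, hence e = d^-1 d in I,
      which is impossible.  So r = s fails in a model of Md + IL. *)

From Pilot Require Import Defs.
From Stdlib Require Import List Setoid Morphisms Ring.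
From Stdlib Require Import Classical ClassicalEpsilon FunctionalExtensionality
  PropExtensionality ProofIrrelevance.
Import ListNotations.
Import Defs.  (* [Add] refers to the term constructor, not [List.Add]. *)

Lemma eval_subst A v sg t :
  eval A v (subst sg t) = eval A (fun n => eval A v (sg n)) t.
Proof. induction t; simpl; congruence. Qed.

Lemma subst_var t : subst Var t = t.
Proof. induction t; simpl; congruence. Qed.

Lemma soundness r s : derives Md r s -> forall A, models A Md -> holds A r s.
Proof.
  intros H A HA. unfold holds. induction H; intro v; simpl; try congruence.
  rewrite !eval_subst. now apply HA.
Qed.

(* The term ring: derivability is a congruence, and Md contains the axioms
   of commutative rings, so the [ring] tactic works modulo Md. *)

Notation "a =~ b" := (derives Md a b) (at level 70).

#[global] Instance derives_equiv : Equivalence (derives Md).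
Proof. split; [intro; apply d_refl | intros ??; apply d_sym | intros ???; apply d_trans]. Qed.
#[global] Instance Add_proper : Proper (derives Md ==> derives Md ==> derives Md) Add.
Proof. intros ?????; now apply d_add. Qed.
#[global] Instance Mul_proper : Proper (derives Md ==> derives Md ==> derives Md) Mul.
Proof. intros ?????; now apply d_mul. Qed.
#[global] Instance Opp_proper : Proper (derives Md ==> derives Md) Opp.
Proof. intros ??; now apply d_opp. Qed.
#[global] Instance Inv_proper : Proper (derives Md ==> derives Md) Inv.
Proof. intros ??; now apply d_inv. Qed.

Definition Sub a b := Add a (Opp b).
#[global] Instance Sub_proper : Proper (derives Md ==> derives Md ==> derives Md) Sub.
Proof. intros ?? H ?? H'; unfold Sub; now rewrite H, H'. Qed.

Definition sub3 a b c : nat -> term :=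
  fun n => match n with 0 => a | 1 => b | _ => c end.

Ltac Md_axiom n a b c :=
  exact (d_ax Md (fst (nth n Md (Zero, Zero))) (snd (nth n Md (Zero, Zero)))
           (sub3 a b c) ltac:(simpl; tauto)).

Lemma add_assoc a b c : Add (Add a b) c =~ Add a (Add b c). Proof. Md_axiom 0 a b c. Qed.
Lemma add_comm a b : Add a b =~ Add b a. Proof. Md_axiom 1 a b a. Qed.
Lemma add_0 a : Add a Zero =~ a. Proof. Md_axiom 2 a a a. Qed.
Lemma add_opp a : Add a (Opp a) =~ Zero. Proof. Md_axiom 3 a a a. Qed.
Lemma mul_assoc a b c : Mul (Mul a b) c =~ Mul a (Mul b c). Proof. Md_axiom 4 a b c. Qed.
Lemma mul_comm a b : Mul a b =~ Mul b a. Proof. Md_axiom 5 a b a. Qed.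
Lemma mul_1 a : Mul One a =~ a. Proof. Md_axiom 6 a a a. Qed.
Lemma mul_add a b c : Mul a (Add b c) =~ Add (Mul a b) (Mul a c). Proof. Md_axiom 7 a b c. Qed.
Lemma inv_inv a : Inv (Inv a) =~ a. Proof. Md_axiom 8 a a a. Qed.
Lemma reflection a : Mul a (Mul a (Inv a)) =~ a. Proof. Md_axiom 9 a a a. Qed.

Lemma term_ring : ring_theory Zero One Add Mul Sub Opp (derives Md).
Proof.
  constructor; intros a b c || intros a b || intros a || idtac.
  - rewrite add_comm; apply add_0.
  - apply add_comm.
  - symmetry; apply add_assoc.
  - apply mul_1.
  - apply mul_comm.
  - symmetry; apply mul_assoc.
  - rewrite mul_comm, mul_add, (mul_comm c a), (mul_comm c b); reflexivity.
  - reflexivity.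
  - apply add_opp.
Qed.

Lemma term_ring_ext : ring_eq_ext Add Mul Opp (derives Md).
Proof. constructor; typeclasses eauto. Qed.

Add Ring term_ring : term_ring (setoid derives_equiv term_ring_ext).

Definition idem (t : term) : term := Mul t (Inv t).

Lemma idem_idem t : Mul (idem t) (idem t) =~ idem t.
Proof.
  unfold idem. transitivity (Mul (Mul t (Mul t (Inv t))) (Inv t)); [ring |].
  now rewrite reflection.
Qed.

Lemma reflection_inv a : Mul (Inv a) (Mul (Inv a) a) =~ Inv a.
Proof. rewrite <- (inv_inv a) at 3. apply reflection. Qed.

Record ideal (J : term -> Prop) : Prop := {
  ideal_proper : Proper (derives Md ==> iff) J;
  ideal_0 : J Zero;
  ideal_add : forall u v, J u -> J v -> J (Add u v);
  ideal_mul : forall a u, J u -> J (Mul a u) }.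

Section Ideals.

Variable J : term -> Prop.
Hypothesis J_ideal : ideal J.

#[local] Instance J_proper : Proper (derives Md ==> iff) J := ideal_proper J J_ideal.

Lemma ideal_eq0 u : u =~ Zero -> J u.
Proof. intros ->; apply (ideal_0 J J_ideal). Qed.

Lemma ideal_mulr u a : J u -> J (Mul u a).
Proof. intro H; rewrite mul_comm; now apply ideal_mul. Qed.

Lemma ideal_opp u : J u -> J (Opp u).
Proof.
  intro H; setoid_replace (Opp u) with (Mul (Opp One) u) by ring. now apply ideal_mul.
Qed.

Definition cong (u v : term) : Prop := J (Sub u v).

Lemma cong_of_derives u v : u =~ v -> cong u v.
Proof. intro H; apply ideal_eq0; rewrite H; ring. Qed.

Lemma cong_sym u v : cong u v -> cong v u.
Proof.
  unfold cong; intro H.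
  setoid_replace (Sub v u) with (Opp (Sub u v)) by ring. now apply ideal_opp.
Qed.

Lemma cong_equiv : Equivalence cong.
Proof.
  split.
  - intro u; now apply cong_of_derives.
  - exact cong_sym.
  - intros u v w H1 H2; unfold cong.
    setoid_replace (Sub u w) with (Add (Sub u v) (Sub v w)) by ring.
    now apply (ideal_add J J_ideal).
Qed.

Lemma cong_add a a' b b' : cong a a' -> cong b b' -> cong (Add a b) (Add a' b').
Proof.
  unfold cong; intros H1 H2.
  setoid_replace (Sub (Add a b) (Add a' b')) with (Add (Sub a a') (Sub b b')) by ring.
  now apply (ideal_add J J_ideal).
Qed.

Lemma cong_mul a a' b b' : cong a a' -> cong b b' -> cong (Mul a b) (Mul a' b').
Proof.
  unfold cong; intros H1 H2.
  setoid_replace (Sub (Mul a b) (Mul a' b')) with (Add (Mul (Sub a a') b) (Mul a' (Sub b b')))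
    by ring.
  apply (ideal_add J J_ideal); [apply ideal_mulr | apply (ideal_mul J J_ideal)]; auto.
Qed.

Lemma cong_opp a a' : cong a a' -> cong (Opp a) (Opp a').
Proof.
  unfold cong; intro H.
  setoid_replace (Sub (Opp a) (Opp a')) with (Opp (Sub a a')) by ring. now apply ideal_opp.
Qed.

(* If u = v mod J then u^-1 (1 - v v^-1) lies in J; by reflection,
   u^-1 = u^-1 u^-1 u and v (1 - v v^-1) = 0. *)
Lemma inv_annihilates u v : cong u v -> J (Mul (Inv u) (Sub One (idem v))).
Proof.
  unfold cong, idem; intro H. rewrite <- (reflection_inv u) at 1.
  setoid_replace (Mul (Mul (Inv u) (Mul (Inv u) u)) (Sub One (Mul v (Inv v))))
    with (Mul (Mul (Inv u) (Inv u)) (Add (Mul (Sub u v) (Sub One (Mul v (Inv v))))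
                                         (Sub v (Mul v (Mul v (Inv v)))))) by ring.
  rewrite reflection. apply (ideal_mul J J_ideal), (ideal_add J J_ideal).
  - now apply ideal_mulr.
  - apply ideal_eq0; ring.
Qed.

(* Inverse respects J:
   u^-1 - v^-1 = u^-1 v^-1 (v - u) + u^-1 (1 - v v^-1) - v^-1 (1 - u u^-1). *)
Lemma cong_inv a a' : cong a a' -> cong (Inv a) (Inv a').
Proof.
  intro H. unfold cong.
  setoid_replace (Sub (Inv a) (Inv a'))
    with (Add (Add (Mul (Mul (Inv a) (Inv a')) (Sub a' a))
                   (Mul (Inv a) (Sub One (idem a'))))
              (Opp (Mul (Inv a') (Sub One (idem a)))))
    by (unfold idem; ring).
  apply (ideal_add J J_ideal); [apply (ideal_add J J_ideal) |].
  - apply (ideal_mul J J_ideal). now apply cong_sym.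
  - now apply inv_annihilates.
  - apply ideal_opp, inv_annihilates. now apply cong_sym.
Qed.

(* A saturated ideal avoiding an idempotent e yields the inverse law: if
   u and 1 - u u^-1 were both outside J then e = e e would lie in J, since
   u (1 - u u^-1) = 0. *)
Lemma saturated_ideal_IL e : Mul e e =~ e -> ~ J e ->
  (forall t, J t \/ exists i a, J i /\ e =~ Add i (Mul a t)) ->
  forall u, ~ J u -> J (Sub One (idem u)).
Proof.
  intros He HeJ Hsat u Hu. apply NNPP; intro Hw.
  destruct (Hsat u) as [? | [i1 [a1 [Hi1 E1]]]]; [contradiction |].
  destruct (Hsat (Sub One (idem u))) as [? | [i2 [a2 [Hi2 E2]]]]; [contradiction |].
  apply HeJ. rewrite <- He.
  rewrite E1 at 1. rewrite E2 at 1.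
  setoid_replace (Mul (Add i1 (Mul a1 u)) (Add i2 (Mul a2 (Sub One (idem u)))))
    with (Add (Add (Mul i1 (Add i2 (Mul a2 (Sub One (idem u))))) (Mul (Mul a1 u) i2))
              (Mul (Mul a1 a2) (Sub u (Mul u (Mul u (Inv u))))))
    by (unfold idem; ring).
  rewrite reflection.
  apply (ideal_add J J_ideal); [apply (ideal_add J J_ideal) |].
  - now apply ideal_mulr.
  - now apply (ideal_mul J J_ideal).
  - apply ideal_eq0; ring.
Qed.

End Ideals.

Section Quotient.

Variable T : Type.
Variable rel : T -> T -> Prop.
Hypothesis rel_equiv : Equivalence rel.

Definition quot : Type := {C : T -> Prop | exists t, C = rel t}.
Definition cls (t : T) : quot := exist _ (rel t) (ex_intro _ t eq_refl).
Definition rep (a : quot) : T :=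
  proj1_sig (constructive_indefinite_description _ (proj2_sig a)).

Lemma quot_ext (a b : quot) : proj1_sig a = proj1_sig b -> a = b.
Proof.
  destruct a as [a pa], b as [b pb]; simpl; intros ->; f_equal; apply proof_irrelevance.
Qed.

Lemma cls_rep (a : quot) : cls (rep a) = a.
Proof.
  apply quot_ext; unfold rep; simpl.
  destruct (constructive_indefinite_description _ _); simpl; auto.
Qed.

Lemma cls_eq t u : cls t = cls u <-> rel t u.
Proof.
  split.
  - intro H. apply (f_equal (@proj1_sig _ _)) in H; simpl in H.
    rewrite H; reflexivity.
  - intro H. apply quot_ext; simpl. apply functional_extensionality; intro w.
    apply propositional_extensionality; split; intro Hw.
    + transitivity t; [now symmetry | exact Hw].
    + transitivity u; assumption.
Qed.

Lemma rep_cls t : rel (rep (cls t)) t.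
Proof. apply cls_eq, cls_rep. Qed.

End Quotient.

Arguments cls {T rel}.
Arguments rep {T rel}.
Arguments cls_eq {T rel rel_equiv} t u.
Arguments rep_cls {T rel rel_equiv} t.

Section QuotientStructure.

Variable J : term -> Prop.
Hypothesis J_ideal : ideal J.

#[local] Instance cong_J_equiv : Equivalence (cong J) := cong_equiv J J_ideal.

Definition term_quot : structure :=
  Struct (quot term (cong J)) (cls Zero) (cls One)
    (fun a b => cls (Add (rep a) (rep b)))
    (fun a b => cls (Mul (rep a) (rep b)))
    (fun a => cls (Opp (rep a)))
    (fun a => cls (Inv (rep a))).

Lemma eval_term_quot v sg : (forall n, v n = cls (sg n)) ->
  forall t, eval term_quot v t = cls (subst sg t).
Proof.
  intros Hv t; induction t; simpl; auto; rewrite ?IHt, ?IHt1, ?IHt2;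
    apply cls_eq; [apply cong_add | apply cong_mul | apply cong_opp | apply cong_inv];
    auto; apply rep_cls.
Qed.

Lemma term_quot_models : models term_quot Md.
Proof.
  intros l r Hin v.
  rewrite !(eval_term_quot v (fun n => rep (v n))) by (intro; symmetry; apply cls_rep).
  apply cls_eq, cong_of_derives; auto. now apply d_ax.
Qed.

Lemma term_quot_IL :
  (forall u, ~ J u -> J (Sub One (idem u))) -> IL term_quot.
Proof.
  intros HJ a Ha. simpl. rewrite <- (cls_rep _ _ a) in Ha |- *.
  set (u := rep a) in *.
  assert (Hu : ~ J u).
  { intro Hu; apply Ha, cls_eq. unfold cong.
    apply (ideal_proper J J_ideal (Sub u Zero) u); [ring | exact Hu]. }
  apply cls_eq.
  transitivity (Mul u (Inv u)).
  - apply cong_mul; [exact J_ideal | apply rep_cls |].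
    transitivity (Inv (rep (cls (rel := cong J) u)));
    [apply rep_cls | apply cong_inv; [exact J_ideal | apply rep_cls]].
  - symmetry. now apply HJ.
Qed.

Lemma term_quot_holds r s : holds term_quot r s -> J (Sub r s).
Proof.
  intro H. specialize (H (fun n => cls (Var n))).
  rewrite !(eval_term_quot _ Var (fun n => eq_refl)), !subst_var in H.
  exact (proj1 (cls_eq _ _) H).
Qed.

End QuotientStructure.

Fixpoint enum (n : nat) : list term :=
  match n with
  | 0 => [Var 0; Zero; One]
  | S k => let l := enum k in
      Var (S k) :: l ++ map Opp l ++ map Inv l ++
        flat_map (fun a => map (Add a) l) l ++
        flat_map (fun a => map (Mul a) l) l
  end.

Fixpoint rank (t : term) : nat :=
  match t with
  | Var k => k
  | Zero | One => 0
  | Add a b | Mul a b => S (max (rank a) (rank b))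
  | Opp a | Inv a => S (rank a)
  end.

Lemma enum_mono t n m : In t (enum n) -> n <= m -> In t (enum m).
Proof.
  intros H Hle; induction Hle; auto.
  simpl; right; apply in_or_app; now left.
Qed.

Lemma enum_complete t : In t (enum (rank t)).
Proof.
  induction t; simpl; rewrite ?in_app_iff.
  - destruct n; simpl; auto.
  - auto.
  - auto.
  - do 4 right; left. apply in_flat_map; exists t1; split.
    + eapply enum_mono; [exact IHt1 | apply PeanoNat.Nat.le_max_l].
    + apply in_map; eapply enum_mono; [exact IHt2 | apply PeanoNat.Nat.le_max_r].
  - do 5 right. apply in_flat_map; exists t1; split.
    + eapply enum_mono; [exact IHt1 | apply PeanoNat.Nat.le_max_l].
    + apply in_map; eapply enum_mono; [exact IHt2 | apply PeanoNat.Nat.le_max_r].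
  - do 2 right; left; apply in_map; auto.
  - do 3 right; left; apply in_map; auto.
Qed.

Section Saturation.

Variable e : term.
Hypothesis e_nonzero : ~ e =~ Zero.

Definition principal (g u : term) : Prop := exists m, u =~ Mul m g.

#[local] Instance principal_proper g : Proper (derives Md ==> iff) (principal g).
Proof. intros u v H; split; intros [m Hm]; exists m; [rewrite <- H | rewrite H]; exact Hm. Qed.

Definition admissible (g : term) : Prop := Mul g g =~ g /\ ~ principal g e.

Definition decides (g t : term) : Prop :=
  principal g t \/ exists i a, principal g i /\ e =~ Add i (Mul a t).

(* The idempotent generating (g) + (f) for idempotents g, f. *)
Definition join (g f : term) : term := Sub (Add g f) (Mul g f).

Lemma join_idem g f : Mul g g =~ g -> Mul f f =~ f ->
  Mul (join g f) (join g f) =~ join g f.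
Proof.
  intros Hg Hf. unfold join.
  transitivity (Add (Add (Add (Mul g g) (Mul f f)) (Mul (Mul g g) (Mul f f)))
     (Sub (Mul (Add One One) (Mul g f))
        (Add (Mul (Add One One) (Mul (Mul g g) f)) (Mul (Add One One) (Mul g (Mul f f))))));
    [ring |].
  rewrite Hg, Hf; ring.
Qed.

Lemma join_absorb g f : Mul g g =~ g -> Mul g (join g f) =~ g.
Proof.
  intro Hg. unfold join.
  transitivity (Add (Mul g g) (Sub (Mul g f) (Mul (Mul g g) f))); [ring |].
  rewrite Hg; ring.
Qed.

Lemma principal_join_l g f u : Mul g g =~ g -> principal g u -> principal (join g f) u.
Proof.
  intros Hg [m Hm]. exists (Mul m g). rewrite Hm.
  rewrite <- (join_absorb g f Hg) at 1. ring.
Qed.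

Lemma principal_join_r g f u : Mul f f =~ f -> principal f u -> principal (join g f) u.
Proof.
  intros Hf [m Hm]. exists (Mul m f). rewrite Hm.
  rewrite <- (join_absorb f g Hf) at 1. unfold join; ring.
Qed.

Definition step (g t : term) : term :=
  if excluded_middle_informative (principal (join g (idem t)) e) then g
  else join g (idem t).

Lemma step_spec g t : admissible g ->
  admissible (step g t) /\ (forall u, principal g u -> principal (step g t) u) /\
  decides (step g t) t.
Proof.
  intros [Hg Hn]. unfold step.
  destruct (excluded_middle_informative (principal (join g (idem t)) e)) as [[m Hm] | Hm].
  - split; [split; auto | split; [auto |]].
    right. exists (Mul (Sub m (Mul m (idem t))) g), (Mul m (Inv t)). split.
    + exists (Sub m (Mul m (idem t))); reflexivity.
    + rewrite Hm; unfold join, idem; ring.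
  - split; [split; [apply join_idem; auto using idem_idem | exact Hm] | split].
    + intros u; now apply principal_join_l.
    + left. apply principal_join_r; [apply idem_idem |].
      exists t. symmetry; apply reflection.
Qed.

Lemma decides_mono g g' t : decides g t ->
  (forall u, principal g u -> principal g' u) -> decides g' t.
Proof. intros [H | [i [a [Hi He]]]] M; [left; auto | right; exists i, a; auto]. Qed.

Lemma steps_spec l : forall g, admissible g ->
  admissible (fold_left step l g) /\
  (forall u, principal g u -> principal (fold_left step l g) u) /\
  (forall t, In t l -> decides (fold_left step l g) t).
Proof.
  induction l as [| a l IH]; simpl; intros g Hg.
  - split; [auto | split; [auto | intros t []]].
  - destruct (step_spec g a Hg) as [P1 [M1 Q1]].
    destruct (IH _ P1) as [P2 [M2 Q2]].
    split; [exact P2 | split; [auto |]].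
    intros t [<- | Hin]; [eapply decides_mono; eauto | auto].
Qed.

Fixpoint chain (n : nat) : term :=
  match n with 0 => Zero | S k => fold_left step (enum k) (chain k) end.

Lemma chain_admissible n : admissible (chain n).
Proof.
  induction n; simpl.
  - split; [ring |]. intros [m Hm]. apply e_nonzero. rewrite Hm; ring.
  - now apply steps_spec.
Qed.

Lemma chain_mono n m u : n <= m -> principal (chain n) u -> principal (chain m) u.
Proof.
  intro Hle; induction Hle; auto. intro Hu; simpl.
  apply (steps_spec (enum m) (chain m) (chain_admissible m)); auto.
Qed.

Definition saturated (u : term) : Prop := exists n, principal (chain n) u.

Lemma saturated_ideal : ideal saturated.
Proof.
  split.
  - intros u v H; split; intros [n Hn]; exists n; [rewrite <- H | rewrite H]; exact Hn.
  - exists 0, Zero; simpl; ring.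
  - intros u v [n Hu] [m Hv]. exists (max n m).
    apply (chain_mono n (max n m)) in Hu; [| apply PeanoNat.Nat.le_max_l].
    apply (chain_mono m (max n m)) in Hv; [| apply PeanoNat.Nat.le_max_r].
    destruct Hu as [a Ha], Hv as [b Hb]. exists (Add a b). rewrite Ha, Hb; ring.
  - intros a u [n [m Hm]]. exists n, (Mul a m). rewrite Hm; ring.
Qed.

Lemma saturated_avoids : ~ saturated e.
Proof. intros [n Hn]. now apply (chain_admissible n). Qed.

Lemma saturated_decides t :
  saturated t \/ exists i a, saturated i /\ e =~ Add i (Mul a t).
Proof.
  destruct (steps_spec (enum (rank t)) (chain (rank t)) (chain_admissible _))
    as [_ [_ Hdec]].
  destruct (Hdec t (enum_complete t)) as [H | [i [a [Hi Ht]]]].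
  - left; exists (S (rank t)); exact H.
  - right; exists i, a; split; [exists (S (rank t)); exact Hi | exact Ht].
Qed.

End Saturation.

Lemma completeness r s :
  (forall A : structure, models A Md -> IL A -> holds A r s) -> r =~ s.
Proof.
  intro H. apply NNPP; intro Hrs.
  set (d := Sub r s).
  assert (He : ~ idem d =~ Zero).
  { intro He. apply Hrs.
    assert (Hd : d =~ Zero) by (rewrite <- (reflection d); fold (idem d); rewrite He; ring).
    transitivity (Add d s); [unfold d; ring | rewrite Hd; ring]. }
  set (J := saturated (idem d)).
  pose proof (saturated_ideal _ He) as J_ideal.
  assert (HIL : IL (term_quot J)).
  { apply (term_quot_IL J J_ideal), (saturated_ideal_IL J J_ideal (idem d)).
    - apply idem_idem.
    - now apply saturated_avoids.
    - now apply saturated_decides. }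
  pose proof (term_quot_holds J J_ideal r s (H _ (term_quot_models J J_ideal) HIL)) as Hd.
  apply (saturated_avoids _ He).
  apply (ideal_proper J J_ideal _ (Mul (Inv d) d)); [unfold idem; ring |].
  now apply (ideal_mul J J_ideal).
Qed.

Theorem corollary1 : forall r s : term,
  derives Md r s <-> (forall A : structure, models A Md -> IL A -> holds A r s).
Proof.
  intros r s; split.
  - intros H A HA _; exact (soundness r s H A HA).
  - apply completeness.
Qed.
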